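(* The closure, in the norm of $C_0^2(\Omega,\mathcal{S}^{d\times d})$, of the set $$\{\phi\in C_c^\infty(\Omega,\mathcal{S}^{d\times d}):\ |\phi(x)|_r\le\alpha_0(x),\ |\operatorname{div}\phi(x)|_r\le\alpha_1(x)\ \forall x\in\Omega\}$$ equals the set $$\{\psi\in C_0^2(\Omega,\mathcal{S}^{d\times d}):\ |\psi(x)|_r\le\alpha_0(x),\ |\operatorname{div}\psi(x)|_r\le\alpha_1(x)\ \forall x\in\Omega\}.$$
   Context: Let $d\ge 2$ and let $\Omega\subset\mathbb{R}^d$ be a bounded open set with Lipschitz boundary. $\mathcal{S}^{d\times d}$ denotes the space of real symmetric $d\times d$ matrices. Fix $1\le r\le\infty$; $|\cdot|_r$ denotes the $\ell^r$ norm on $\mathbb{R}^d$ and the $\ell^r$ norm of the entries on $\mathcal{S}^{d\times d}$. For $\phi$ with values in $\mathcal{S}^{d\times d}$, $(\operatorname{div}\phi)_i=\sum_{j=1}^d\partial_{x_j}\phi_{ij}$. Let $\alpha_0,\alpha_1\in C(\overline\Omega)$ with $\alpha_0(x),\alpha_1(x)>\underline\alpha$ for all $x\in\Omega$, for some constant $\underline\alpha>0$. $C_0^2(\Omega,\mathcal{S}^{d\times d})$ denotes the closure of $C_c^\infty(\Omega,\mathcal{S}^{d\times d})$ with respect to the norm $\|\phi\|_{C^2}=\sum_{|\beta|\le 2}\sup_{x\in\Omega}|\partial^\beta\phi(x)|$. *)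

From Stdlib Require Import Reals Lra.
Open Scope R_scope.

(** Points of R^d are functions [nat -> R]; only coordinates [k < d] matter,
    and points of R^d are required to vanish at coordinates [k >= d]. *)
Definition pt := nat -> R.
(** Matrix values: only entries [i j < d] matter. *)
Definition Mat := nat -> nat -> R.

Definition inRd (d : nat) (x : pt) : Prop := forall k, (d <= k)%nat -> x k = 0.

Fixpoint rsum (n : nat) (f : nat -> R) : R :=
  match n with O => 0 | S m => rsum m f + f m end.
Fixpoint rmax (n : nat) (f : nat -> R) : R :=
  match n with O => 0 | S m => Rmax (rmax m f) (f m) end.

Definition near (d : nat) (x y : pt) (del : R) : Prop :=
  forall k, (k < d)%nat -> Rabs (y k - x k) < del.

Inductive exponent : Type := Fin (p : R) | Inf.
Definition valid_exponent (r : exponent) : Prop :=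
  match r with Fin p => 1 <= p | Inf => True end.

(** a^y for a >= 0, with 0^y = 0 (y > 0). *)
Definition rpow0 (a y : R) : R := if Rle_dec a 0 then 0 else Rpower a y.

Definition lr_vec (r : exponent) (d : nat) (v : nat -> R) : R :=
  match r with
  | Fin p => rpow0 (rsum d (fun i => rpow0 (Rabs (v i)) p)) (/ p)
  | Inf => rmax d (fun i => Rabs (v i))
  end.

Definition lr_mat (r : exponent) (d : nat) (A : Mat) : R :=
  match r with
  | Fin p => rpow0 (rsum d (fun i => rsum d (fun j => rpow0 (Rabs (A i j)) p))) (/ p)
  | Inf => rmax d (fun i => rmax d (fun j => Rabs (A i j)))
  end.

Definition mnorm (d : nat) (A : Mat) : R := rsum d (fun i => rsum d (fun j => Rabs (A i j))).

Definition upd (x : pt) (i : nat) (t : R) : pt :=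
  fun k => if Nat.eqb k i then x k + t else x k.

Definition has_pderiv (U : pt -> Prop) (f : pt -> R) (i : nat) (g : pt -> R) : Prop :=
  forall x, U x -> derivable_pt_lim (fun t => f (upd x i t)) 0 (g x).

Definition cont_on (d : nat) (U : pt -> Prop) (f : pt -> R) : Prop :=
  forall x, U x -> forall eps, 0 < eps -> exists del, 0 < del /\
    forall y, U y -> near d x y del -> Rabs (f y - f x) < eps.

Definition is_open (d : nat) (U : pt -> Prop) : Prop :=
  (forall x, U x -> inRd d x) /\
  forall x, U x -> exists del, 0 < del /\
    forall y, inRd d y -> near d x y del -> U y.

Definition bounded_set (d : nat) (U : pt -> Prop) : Prop :=
  exists M, forall x, U x -> forall k, (k < d)%nat -> Rabs (x k) <= M.

Definition closure (d : nat) (U : pt -> Prop) (x : pt) : Prop :=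
  inRd d x /\ forall del, 0 < del -> exists y, U y /\ near d x y del.

Definition boundary (d : nat) (U : pt -> Prop) (x : pt) : Prop :=
  closure d U x /\ ~ U x.

(** Lipschitz boundary: near each boundary point x0, after an orthogonal change
    of coordinates z = Q (y - x0), U is (inside a cylinder) the region below
    the graph z_{d-1} < g(z_0,...,z_{d-2}) of a Lipschitz function g. *)
Definition orthogonal (d : nat) (Q : Mat) : Prop :=
  forall i j, (i < d)%nat -> (j < d)%nat ->
    rsum d (fun m => Q i m * Q j m) = if Nat.eqb i j then 1 else 0.

Definition lipschitz_boundary (d : nat) (U : pt -> Prop) : Prop :=
  forall x0, boundary d U x0 ->
  exists (Q : Mat) (rho h L : R) (g : pt -> R),
    orthogonal d Q /\ 0 < rho /\ 0 < h /\ 0 <= L /\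
    (forall a b, Rabs (g a - g b) <= L * rmax (d - 1) (fun k => Rabs (a k - b k))) /\
    (forall a, near (d - 1) (fun _ => 0) a rho -> Rabs (g a) < h) /\
    forall y, inRd d y ->
      let z := fun k => rsum d (fun m => Q k m * (y m - x0 m)) in
      near (d - 1) (fun _ => 0) z rho -> Rabs (z (d - 1)%nat) < h ->
      (U y <-> z (d - 1)%nat < g z).

Definition symmetric_field (d : nat) (U : pt -> Prop) (phi : pt -> Mat) : Prop :=
  forall x, U x -> forall i j, (i < d)%nat -> (j < d)%nat -> phi x i j = phi x j i.

(** smooth: all iterated partial derivatives exist and are continuous on U;
    D l is the derivative along the list of directions l. *)
Definition smooth_on (d : nat) (U : pt -> Prop) (f : pt -> R) : Prop :=
  exists D : list nat -> pt -> R,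
    (forall x, U x -> D nil x = f x) /\
    (forall l i, (i < d)%nat -> has_pderiv U (D l) i (D (cons i l))) /\
    (forall l, cont_on d U (D l)).

(** compact support in U (U bounded): f vanishes on the points of U that are
    within some positive distance del of the complement of U in R^d. *)
Definition compact_support_in (d : nat) (U : pt -> Prop) (f : pt -> R) : Prop :=
  exists del, 0 < del /\
    forall x, U x -> (exists y, inRd d y /\ ~ U y /\ near d x y del) -> f x = 0.

Definition in_Ccinf (d : nat) (U : pt -> Prop) (phi : pt -> Mat) : Prop :=
  symmetric_field d U phi /\
  forall a b, (a < d)%nat -> (b < d)%nat ->
    smooth_on d U (fun x => phi x a b) /\ compact_support_in d U (fun x => phi x a b).

(** ||h||_{C^2} < eps, with ||h|| = sum_{|beta|<=2} sup_{x in U} |d^beta h(x)|;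
    multi-indices: beta = 0, e_i (i<d), e_i + e_j (i <= j < d). *)
Definition c2_small (d : nat) (U : pt -> Prop) (h : pt -> Mat) (eps : R) : Prop :=
  exists (D1 : nat -> pt -> Mat) (D2 : nat -> nat -> pt -> Mat),
    (forall i a b, (i < d)%nat -> (a < d)%nat -> (b < d)%nat ->
       has_pderiv U (fun x => h x a b) i (fun x => D1 i x a b)) /\
    (forall i j a b, (i < d)%nat -> (j < d)%nat -> (a < d)%nat -> (b < d)%nat ->
       has_pderiv U (fun x => D1 i x a b) j (fun x => D2 i j x a b)) /\
    exists (M0 : R) (M1 : nat -> R) (M2 : nat -> nat -> R),
      (forall x, U x -> mnorm d (h x) <= M0) /\
      (forall i x, (i < d)%nat -> U x -> mnorm d (D1 i x) <= M1 i) /\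
      (forall i j x, (i <= j)%nat -> (j < d)%nat -> U x -> mnorm d (D2 i j x) <= M2 i j) /\
      M0 + rsum d M1 + rsum d (fun i => rsum d (fun j => if Nat.leb i j then M2 i j else 0))
        < eps.

Definition mdiff (phi psi : pt -> Mat) : pt -> Mat := fun x i j => phi x i j - psi x i j.

(** psi in C_0^2(U, S^{dxd}): the C^2-closure of C_c^infty(U, S^{dxd}) *)
Definition in_C02 (d : nat) (U : pt -> Prop) (psi : pt -> Mat) : Prop :=
  forall eps, 0 < eps -> exists phi, in_Ccinf d U phi /\ c2_small d U (mdiff psi phi) eps.

(** pointwise constraints |phi(x)|_r <= a0(x), |div phi(x)|_r <= a1(x) on U,
    where (div phi)_i = sum_j d_j phi_ij *)
Definition constrained (d : nat) (U : pt -> Prop) (r : exponent) (a0 a1 : pt -> R)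
  (phi : pt -> Mat) : Prop :=
  exists D1 : nat -> pt -> Mat,
    (forall j a b, (j < d)%nat -> (a < d)%nat -> (b < d)%nat ->
       has_pderiv U (fun x => phi x a b) j (fun x => D1 j x a b)) /\
    forall x, U x ->
      lr_mat r d (phi x) <= a0 x /\
      lr_vec r d (fun i => rsum d (fun j => D1 j x i j)) <= a1 x.

(* Closedness: C^2-closeness controls the values and the divergence uniformly, and the l^r norm
   is stable under small perturbations through the quasi-triangle inequality
   |u + w|_r <= (1 + s)|u|_r + (1 + 1/s)|w|_r, so the pointwise constraints pass to C^2 limits.
   Density: given psi in C_0^2 satisfying the constraints, take phi in C_c^infty C^2-close to psi
   and use (1 - t) phi. Since alpha_0, alpha_1 > al > 0, shrinking by 1 - t leaves a margin t^2 al
   that absorbs the approximation error, while psi - (1 - t) phi = (1 - t)(psi - phi) + t psi is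
   C^2-small because psi has a finite C^2 norm: compactly supported smooth functions on a bounded
   open set have bounded derivatives (by compactness of a box containing it). *)

From Stdlib Require Import Reals Lra Lia List Classical ClassicalEpsilon FunctionalExtensionality.
From Coquelicot Require Import Compactness.
Open Scope R_scope.

(** * Finite sums and maxima *)

Lemma rsum_le_compat n f g : (forall k, (k < n)%nat -> f k <= g k) -> rsum n f <= rsum n g.
Proof.
  induction n as [|n IH]; intros Hfg; simpl; [lra|].
  assert (f n <= g n) by (apply Hfg; lia).
  assert (rsum n f <= rsum n g) by (apply IH; intros; apply Hfg; lia).
  lra.
Qed.

Lemma rsum_ext n f g : (forall k, (k < n)%nat -> f k = g k) -> rsum n f = rsum n g.
Proof.
  intros Hfg; apply Rle_antisym; apply rsum_le_compat; intros k Hk; rewrite Hfg by exact Hk; lra.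
Qed.

Lemma rsum_plus n f g : rsum n (fun k => f k + g k) = rsum n f + rsum n g.
Proof. induction n as [|n IH]; simpl; [ring|rewrite IH; ring]. Qed.

Lemma rsum_minus n f g : rsum n (fun k => f k - g k) = rsum n f - rsum n g.
Proof. induction n as [|n IH]; simpl; [ring|rewrite IH; ring]. Qed.

Lemma rsum_scal n c f : rsum n (fun k => c * f k) = c * rsum n f.
Proof. induction n as [|n IH]; simpl; [ring|rewrite IH; ring]. Qed.

Lemma rsum_const n c : rsum n (fun _ => c) = INR n * c.
Proof. induction n as [|n IH]; simpl rsum; [simpl; ring|rewrite IH, S_INR; ring]. Qed.

Lemma rsum_nonneg n f : (forall k, (k < n)%nat -> 0 <= f k) -> 0 <= rsum n f.
Proof.
  intros Hf. replace 0 with (rsum n (fun _ => 0)) by (rewrite rsum_const; ring).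
  now apply rsum_le_compat.
Qed.

Lemma rsum_ge_term n f k : (forall k, (k < n)%nat -> 0 <= f k) -> (k < n)%nat -> f k <= rsum n f.
Proof.
  induction n as [|n IH]; intros Hf Hk; [lia|simpl].
  destruct (Nat.eq_dec k n) as [->|Hkn].
  - assert (0 <= rsum n f) by (apply rsum_nonneg; intros; apply Hf; lia). lra.
  - assert (f k <= rsum n f) by (apply IH; [intros; apply Hf|]; lia).
    assert (0 <= f n) by (apply Hf; lia). lra.
Qed.

Lemma Rabs_rsum_le n f : Rabs (rsum n f) <= rsum n (fun k => Rabs (f k)).
Proof.
  induction n as [|n IH]; simpl; [rewrite Rabs_R0; lra|].
  eapply Rle_trans; [apply Rabs_triang|lra].
Qed.

Lemma rsum_add_len m n f : rsum (m + n) f = rsum m f + rsum n (fun k => f (m + k)%nat).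
Proof.
  induction n as [|n IH]; simpl; [rewrite Nat.add_0_r; ring|].
  rewrite Nat.add_succ_r; simpl; rewrite IH; ring.
Qed.

Lemma rsum_nested m n f :
  rsum m (fun i => rsum n (fun j => f (i * n + j)%nat)) = rsum (m * n) f.
Proof.
  induction m as [|m IH]; [reflexivity|].
  replace (S m * n)%nat with (m * n + n)%nat by lia.
  rewrite rsum_add_len, <- IH. reflexivity.
Qed.

Lemma rmax_nonneg n f : 0 <= rmax n f.
Proof. induction n; simpl; [lra|eapply Rle_trans; [eauto|apply Rmax_l]]. Qed.

Lemma rmax_le_compat n f g : (forall k, (k < n)%nat -> f k <= g k) -> rmax n f <= rmax n g.
Proof.
  induction n as [|n IH]; intros Hfg; simpl; [lra|].
  assert (f n <= g n) by (apply Hfg; lia).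
  assert (rmax n f <= rmax n g) by (apply IH; intros; apply Hfg; lia).
  apply Rmax_lub; eapply Rle_trans; eauto; [apply Rmax_l|apply Rmax_r].
Qed.

Lemma rmax_ext n f g : (forall k, (k < n)%nat -> f k = g k) -> rmax n f = rmax n g.
Proof.
  intros Hfg; apply Rle_antisym; apply rmax_le_compat; intros k Hk; rewrite Hfg by exact Hk; lra.
Qed.

Lemma rmax_ge_term n f k : (k < n)%nat -> f k <= rmax n f.
Proof.
  induction n as [|n IH]; intros Hk; [lia|simpl].
  destruct (Nat.eq_dec k n) as [->|]; [apply Rmax_r|].
  eapply Rle_trans; [apply IH; lia|apply Rmax_l].
Qed.

Lemma rmax_lt n f c : 0 < c -> (forall k, (k < n)%nat -> f k < c) -> rmax n f < c.
Proof.
  induction n as [|n IH]; simpl; intros Hc Hf; [lra|].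
  apply Rmax_case; [apply IH|apply Hf]; auto.
Qed.

Lemma rmax_scal n c f : 0 <= c -> rmax n (fun k => c * f k) = c * rmax n f.
Proof. intros Hc; induction n as [|n IH]; simpl; [ring|rewrite IH, RmaxRmult; auto]. Qed.

Lemma rmax_plus n f g : rmax n (fun k => f k + g k) <= rmax n f + rmax n g.
Proof.
  induction n as [|n IH]; simpl; [lra|].
  apply Rmax_lub; [eapply Rle_trans; [eauto|]|]; apply Rplus_le_compat; (apply Rmax_l || apply Rmax_r).
Qed.

Lemma rmax_add_len m n f : rmax (m + n) f = Rmax (rmax m f) (rmax n (fun k => f (m + k)%nat)).
Proof.
  induction n as [|n IH]; simpl.
  - rewrite Nat.add_0_r, Rmax_left; [reflexivity|apply rmax_nonneg].
  - rewrite Nat.add_succ_r; simpl; rewrite IH, Rmax_assoc. reflexivity.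
Qed.

Lemma rmax_nested m n f :
  rmax m (fun i => rmax n (fun j => f (i * n + j)%nat)) = rmax (m * n) f.
Proof.
  induction m as [|m IH]; [reflexivity|].
  replace (S m * n)%nat with (m * n + n)%nat by lia.
  rewrite rmax_add_len, <- IH. reflexivity.
Qed.

(** * Entrywise l^r norms *)

Lemma rpow0_nonneg a y : 0 <= rpow0 a y.
Proof. unfold rpow0; destruct (Rle_dec a 0); [lra|left; apply exp_pos]. Qed.

Lemma rpow0_nonpos a y : a <= 0 -> rpow0 a y = 0.
Proof. intros; unfold rpow0; destruct (Rle_dec a 0); [reflexivity|lra]. Qed.

Lemma rpow0_pos a y : 0 < a -> rpow0 a y = Rpower a y.
Proof. intros; unfold rpow0; destruct (Rle_dec a 0); [lra|reflexivity]. Qed.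

Lemma rpow0_le_compat a b y : 0 <= a <= b -> 0 <= y -> rpow0 a y <= rpow0 b y.
Proof.
  intros [Ha Hab] Hy. destruct (Rle_dec a 0).
  - rewrite rpow0_nonpos by lra. apply rpow0_nonneg.
  - rewrite !rpow0_pos by lra. apply Rle_Rpower_l; lra.
Qed.

Lemma rpow0_mult a b y : 0 <= a -> 0 <= b -> rpow0 (a * b) y = rpow0 a y * rpow0 b y.
Proof.
  intros Ha Hb.
  destruct (Req_dec a 0) as [->|Ha']; [rewrite Rmult_0_l, rpow0_nonpos by lra; ring|].
  destruct (Req_dec b 0) as [->|Hb']; [rewrite Rmult_0_r, !(rpow0_nonpos 0) by lra; ring|].
  rewrite !rpow0_pos by (try apply Rmult_lt_0_compat; lra).
  symmetry; apply Rpower_mult_distr; lra.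
Qed.

Lemma rpow0_pow_inv a p : 0 <= a -> 0 < p ->
  rpow0 (rpow0 a p) (/ p) = a /\ rpow0 (rpow0 a (/ p)) p = a.
Proof.
  intros Ha Hp. destruct (Req_dec a 0) as [->|Ha'].
  { rewrite !(rpow0_nonpos 0) by lra. split; lra. }
  rewrite !(rpow0_pos a) by lra.
  assert (0 < Rpower a p) by apply exp_pos.
  assert (0 < Rpower a (/ p)) by apply exp_pos.
  rewrite !rpow0_pos, !Rpower_mult, Rinv_r, Rinv_l by lra.
  split; apply Rpower_1; lra.
Qed.

Lemma rpow0_superadditive a b p : 0 <= a -> 0 <= b -> 1 <= p ->
  rpow0 a p + rpow0 b p <= rpow0 (a + b) p.
Proof.
  intros Ha Hb Hp.
  destruct (Req_dec a 0) as [->|Ha']; [rewrite (rpow0_nonpos 0), !Rplus_0_l by lra; lra|].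
  destruct (Req_dec b 0) as [->|Hb']; [rewrite (rpow0_nonpos 0), !Rplus_0_r by lra; lra|].
  rewrite !rpow0_pos by lra.
  replace p with (1 + (p - 1)) by ring. rewrite !Rpower_plus, !Rpower_1 by lra.
  assert (Rpower a (p - 1) <= Rpower (a + b) (p - 1)) by (apply Rle_Rpower_l; lra).
  assert (Rpower b (p - 1) <= Rpower (a + b) (p - 1)) by (apply Rle_Rpower_l; lra).
  nra.
Qed.

Lemma rpow0_root_subadditive a b p : 0 <= a -> 0 <= b -> 1 <= p ->
  rpow0 (a + b) (/ p) <= rpow0 a (/ p) + rpow0 b (/ p).
Proof.
  intros Ha Hb Hp.
  assert (Hp' : 0 < / p) by (apply Rinv_0_lt_compat; lra).
  set (x := rpow0 a (/ p)). set (y := rpow0 b (/ p)).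
  assert (0 <= x) by apply rpow0_nonneg. assert (0 <= y) by apply rpow0_nonneg.
  replace (a + b) with (rpow0 x p + rpow0 y p)
    by (unfold x, y; rewrite (proj2 (rpow0_pow_inv a p Ha ltac:(lra))),
                            (proj2 (rpow0_pow_inv b p Hb ltac:(lra))); reflexivity).
  rewrite <- (proj1 (rpow0_pow_inv (x + y) p ltac:(lra) ltac:(lra))).
  apply rpow0_le_compat; [|lra]. split.
  - pose proof (rpow0_nonneg x p); pose proof (rpow0_nonneg y p); lra.
  - now apply rpow0_superadditive.
Qed.

Lemma rpow0_Rmax a b p : rpow0 (Rmax a b) p <= rpow0 a p + rpow0 b p.
Proof.
  pose proof (rpow0_nonneg a p); pose proof (rpow0_nonneg b p).
  apply Rmax_case; lra.
Qed.

Lemma Rabs_plus_le_Rmax s x y : 0 < s ->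
  Rabs (x + y) <= Rmax ((1 + s) * Rabs x) ((1 + / s) * Rabs y).
Proof.
  intros Hs. pose proof (Rabs_triang x y). pose proof (Rinv_0_lt_compat s Hs).
  pose proof (Rabs_pos x); pose proof (Rabs_pos y).
  destruct (Rle_dec (Rabs y) (s * Rabs x)).
  - eapply Rle_trans; [|apply Rmax_l]. lra.
  - eapply Rle_trans; [|apply Rmax_r].
    assert (Rabs x <= / s * Rabs y); [|lra].
    apply (Rmult_le_reg_l s); [lra|]. rewrite <- Rmult_assoc, Rinv_r; lra.
Qed.

Lemma Rdiv_succ_mult_le a b : 0 <= a -> 0 <= b -> a / (b + 1) * b <= a.
Proof.
  intros Ha Hb. apply Rle_trans with (a / (b + 1) * (b + 1)).
  - apply Rmult_le_compat_l; [|lra].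
    unfold Rdiv; apply Rmult_le_pos; [lra|left; apply Rinv_0_lt_compat; lra].
  - right; field; lra.
Qed.

Section LrVec.
Variables (r : exponent) (n : nat).
Hypothesis hr : valid_exponent r.

Lemma lr_vec_nonneg v : 0 <= lr_vec r n v.
Proof. destruct r; [apply rpow0_nonneg|apply rmax_nonneg]. Qed.

Lemma lr_vec_le_compat u v : (forall k, (k < n)%nat -> Rabs (u k) <= Rabs (v k)) ->
  lr_vec r n u <= lr_vec r n v.
Proof.
  intros Huv. destruct r as [p|]; simpl in *.
  - apply rpow0_le_compat; [split|left; apply Rinv_0_lt_compat; lra].
    + apply rsum_nonneg; intros; apply rpow0_nonneg.
    + apply rsum_le_compat; intros k Hk. apply rpow0_le_compat; [|lra].
      split; [apply Rabs_pos|auto].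
  - now apply rmax_le_compat.
Qed.

Lemma lr_vec_scal c v : 0 <= c -> lr_vec r n (fun k => c * v k) = c * lr_vec r n v.
Proof.
  intros Hc. destruct r as [p|]; simpl in *.
  - rewrite (rsum_ext n _ (fun k => rpow0 c p * rpow0 (Rabs (v k)) p)).
    2:{ intros k _. rewrite Rabs_mult, (Rabs_pos_eq c) by lra.
        apply rpow0_mult; [lra|apply Rabs_pos]. }
    rewrite rsum_scal, rpow0_mult by
      (apply rpow0_nonneg || (apply rsum_nonneg; intros; apply rpow0_nonneg)).
    now rewrite (proj1 (rpow0_pow_inv c p Hc ltac:(lra))).
  - rewrite <- rmax_scal by exact Hc. apply rmax_ext; intros k _.
    rewrite Rabs_mult, (Rabs_pos_eq c); lra.
Qed.

Lemma lr_vec_Rmax u w :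
  lr_vec r n (fun k => Rmax (Rabs (u k)) (Rabs (w k))) <= lr_vec r n u + lr_vec r n w.
Proof.
  destruct r as [p|]; simpl in *.
  - assert (Hp : 0 < p) by lra.
    eapply Rle_trans; [|apply rpow0_root_subadditive;
      (lra || (apply rsum_nonneg; intros; apply rpow0_nonneg))].
    rewrite <- rsum_plus.
    apply rpow0_le_compat; [split|left; apply Rinv_0_lt_compat; lra].
    + apply rsum_nonneg; intros; apply rpow0_nonneg.
    + apply rsum_le_compat; intros k _.
      rewrite Rabs_pos_eq by (eapply Rle_trans; [apply Rabs_pos|apply Rmax_l]).
      apply rpow0_Rmax.
  - eapply Rle_trans; [|apply rmax_plus]. apply rmax_le_compat; intros k _.
    pose proof (Rabs_pos (u k)); pose proof (Rabs_pos (w k)).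
    rewrite Rabs_pos_eq by (eapply Rle_trans; [apply Rabs_pos|apply Rmax_l]).
    apply Rmax_case; lra.
Qed.

Lemma lr_vec_quasi_triangle s u w : 0 < s ->
  lr_vec r n (fun k => u k + w k) <= (1 + s) * lr_vec r n u + (1 + / s) * lr_vec r n w.
Proof.
  intros Hs. pose proof (Rinv_0_lt_compat s Hs).
  rewrite <- !lr_vec_scal by lra.
  eapply Rle_trans; [|apply lr_vec_Rmax]. apply lr_vec_le_compat; intros k _.
  rewrite (Rabs_pos_eq (Rmax _ _)) by (eapply Rle_trans; [apply Rabs_pos|apply Rmax_l]).
  rewrite !Rabs_mult, !(Rabs_pos_eq (1 + _)) by lra.
  now apply Rabs_plus_le_Rmax.
Qed.

Lemma lr_vec_perturb s e u v : 0 < s -> 0 <= e ->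
  (forall k, (k < n)%nat -> Rabs (v k - u k) <= e) ->
  lr_vec r n v <= (1 + s) * lr_vec r n u + (1 + / s) * e * lr_vec r n (fun _ => 1).
Proof.
  intros Hs He Hvu. pose proof (Rinv_0_lt_compat s Hs).
  replace v with (fun k => u k + (v k - u k)) by
    (apply functional_extensionality; intros; ring).
  eapply Rle_trans; [apply lr_vec_quasi_triangle; exact Hs|].
  rewrite Rmult_assoc, <- (lr_vec_scal e) by exact He.
  apply Rplus_le_compat_l, Rmult_le_compat_l; [lra|].
  apply lr_vec_le_compat; intros k Hk.
  rewrite Rmult_1_r, (Rabs_pos_eq e) by exact He. auto.
Qed.

Lemma lr_vec_le_of_approx a v :
  (forall e, 0 < e -> exists u, lr_vec r n u <= a /\
     forall k, (k < n)%nat -> Rabs (v k - u k) <= e) ->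
  lr_vec r n v <= a.
Proof.
  intros Happrox.
  assert (HC : 0 <= lr_vec r n (fun _ => 1)) by apply lr_vec_nonneg.
  assert (Ha : 0 <= a).
  { destruct (Happrox 1 Rlt_0_1) as [u [Hu _]]. pose proof (lr_vec_nonneg u). lra. }
  assert (Hgrow : forall s, 0 < s -> lr_vec r n v <= (1 + s) * a).
  { intros s Hs. pose proof (Rinv_0_lt_compat s Hs).
    apply Rle_plus_epsilon; intros eps Heps.
    set (K := (1 + / s) * lr_vec r n (fun _ => 1)).
    assert (HK : 0 <= K) by (unfold K; nra).
    destruct (Happrox (eps / (K + 1))) as [u [Hu Hvu]]; [apply Rdiv_lt_0_compat; lra|].
    eapply Rle_trans; [apply (lr_vec_perturb s (eps / (K + 1)) u); auto; left;
                       apply Rdiv_lt_0_compat; lra|].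
    pose proof (Rdiv_succ_mult_le eps K ltac:(lra) HK).
    replace ((1 + / s) * (eps / (K + 1)) * lr_vec r n (fun _ => 1)) with (eps / (K + 1) * K)
      by (unfold K; ring).
    nra. }
  apply Rle_plus_epsilon; intros eps Heps.
  specialize (Hgrow (eps / (a + 1)) ltac:(apply Rdiv_lt_0_compat; lra)).
  pose proof (Rdiv_succ_mult_le eps a ltac:(lra) Ha). nra.
Qed.

(* Shrinking by [1 - t] gains [t^2 a > t^2 al] of room below the bound [a], which absorbs
   an error of size [e] once [e] is small in terms of [al] and [t] only. *)
Lemma lr_vec_shrink_le al t : 0 < al -> 0 < t <= 1 ->
  exists e0, 0 < e0 /\ forall a u v e, al < a -> lr_vec r n u <= a -> 0 <= e <= e0 ->
    (forall k, (k < n)%nat -> Rabs (v k - u k) <= e) ->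
    lr_vec r n (fun k => (1 - t) * v k) <= a.
Proof.
  intros Hal Ht. pose proof (Rinv_0_lt_compat t (proj1 Ht)).
  set (K := (1 + / t) * lr_vec r n (fun _ => 1)).
  assert (HK : 0 <= K) by (unfold K; pose proof (lr_vec_nonneg (fun _ => 1)); nra).
  assert (Htal : 0 < t * t * al) by (repeat apply Rmult_lt_0_compat; lra).
  exists (t * t * al / (K + 1)). split; [apply Rdiv_lt_0_compat; lra|].
  intros a u v e Ha Hu He Hvu.
  rewrite lr_vec_scal by lra.
  pose proof (lr_vec_perturb t e u v (proj1 Ht) (proj1 He) Hvu) as Hv.
  replace ((1 + / t) * e * lr_vec r n (fun _ => 1)) with (e * K) in Hv by (unfold K; ring).
  assert (e * K <= t * t * al).
  { pose proof (Rdiv_succ_mult_le (t * t * al) K ltac:(lra) HK).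
    apply Rle_trans with (t * t * al / (K + 1) * K); [apply Rmult_le_compat_r|]; lra. }
  pose proof (lr_vec_nonneg v). pose proof (lr_vec_nonneg u).
  assert ((1 - t) * lr_vec r n v <= (1 - t) * ((1 + t) * a + e * K))
    by (apply Rmult_le_compat_l; nra).
  assert (t * t * al <= t * t * a) by (apply Rmult_le_compat_l; nra).
  assert (0 <= e * K) by (apply Rmult_le_pos; lra).
  assert ((1 - t) * (e * K) <= e * K) by nra.
  replace ((1 - t) * ((1 + t) * a + e * K)) with (a - t * t * a + (1 - t) * (e * K)) in * by ring.
  lra.
Qed.
End LrVec.

Definition flatten (d : nat) (A : Mat) : nat -> R := fun k => A (k / d)%nat (k mod d)%nat.

Lemma flatten_entry d A i j : (j < d)%nat -> flatten d A (i * d + j) = A i j.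
Proof.
  intros Hj. unfold flatten.
  rewrite Nat.div_add_l, Nat.div_small, Nat.add_0_r by lia.
  rewrite Nat.add_comm, Nat.Div0.mod_add, Nat.mod_small by lia. reflexivity.
Qed.

Lemma flatten_index_lt d k : (k < d * d)%nat -> (k / d < d)%nat /\ (k mod d < d)%nat.
Proof.
  intros Hk. assert (d <> 0%nat) by lia. split.
  - apply Nat.Div0.div_lt_upper_bound; lia.
  - now apply Nat.mod_upper_bound.
Qed.

Lemma lr_mat_flatten r d A : lr_mat r d A = lr_vec r (d * d) (flatten d A).
Proof.
  destruct r; simpl; [f_equal; rewrite <- rsum_nested|rewrite <- rmax_nested];
    [apply rsum_ext|apply rmax_ext]; intros i _;
    [apply rsum_ext|apply rmax_ext]; intros j Hj; now rewrite flatten_entry.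
Qed.

Lemma flatten_close d A B e :
  (forall i j, (i < d)%nat -> (j < d)%nat -> Rabs (B i j - A i j) <= e) ->
  forall k, (k < d * d)%nat -> Rabs (flatten d B k - flatten d A k) <= e.
Proof. intros HAB k Hk. destruct (flatten_index_lt d k Hk). now apply HAB. Qed.

(** * Partial derivatives *)

Lemma upd_inRd d x i t : inRd d x -> (i < d)%nat -> inRd d (upd x i t).
Proof. intros Hx Hi k Hk. unfold upd. destruct (Nat.eqb_spec k i); [lia|auto]. Qed.

Lemma Rabs_sub_upd_le x i t k y : Rabs (y k - upd x i t k) <= Rabs (y k - x k) + Rabs t.
Proof.
  unfold upd. destruct (Nat.eqb k i); [|pose proof (Rabs_pos t); lra].
  replace (y k - (x k + t)) with ((y k - x k) + - t) by ring.
  rewrite <- (Rabs_Ropp t). apply Rabs_triang.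
Qed.

Lemma is_open_upd d U x i : is_open d U -> U x -> (i < d)%nat ->
  exists rho, 0 < rho /\ forall t, Rabs t < rho -> U (upd x i t).
Proof.
  intros [HUd HU] Hx Hi. destruct (HU x Hx) as [del [Hdel Hnear]].
  exists del; split; auto. intros t Ht.
  apply Hnear; [apply upd_inRd; auto|].
  intros k Hk. rewrite Rabs_minus_sym. eapply Rle_lt_trans; [apply Rabs_sub_upd_le|].
  rewrite Rminus_diag, Rabs_R0. lra.
Qed.

Lemma derivable_pt_lim_local (f g : R -> R) l :
  (exists rho, 0 < rho /\ forall t, Rabs t < rho -> f t = g t) ->
  derivable_pt_lim g 0 l -> derivable_pt_lim f 0 l.
Proof.
  intros [rho [Hrho Hfg]] Hg eps Heps. destruct (Hg eps Heps) as [del Hdel].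
  assert (Hmin : 0 < Rmin del rho) by (apply Rmin_pos; [apply cond_pos|auto]).
  exists (mkposreal _ Hmin). simpl. intros h Hh0 Hh.
  rewrite (Hfg (0 + h)), (Hfg 0).
  - apply Hdel; auto. eapply Rlt_le_trans; [eauto|apply Rmin_l].
  - rewrite Rabs_R0; auto.
  - rewrite Rplus_0_l. eapply Rlt_le_trans; [eauto|apply Rmin_r].
Qed.

Lemma has_pderiv_ext U f g i D : (forall x, f x = g x) -> has_pderiv U f i D -> has_pderiv U g i D.
Proof. intros Hfg. now replace g with f by (apply functional_extensionality; auto). Qed.

Lemma has_pderiv_lin U f g i Df Dg a b : has_pderiv U f i Df -> has_pderiv U g i Dg ->
  has_pderiv U (fun x => a * f x + b * g x) i (fun x => a * Df x + b * Dg x).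
Proof.
  intros Hf Hg x Hx.
  apply derivable_pt_lim_plus; apply derivable_pt_lim_scal; [apply Hf|apply Hg]; auto.
Qed.

Lemma has_pderiv_plus U f g i Df Dg : has_pderiv U f i Df -> has_pderiv U g i Dg ->
  has_pderiv U (fun x => f x + g x) i (fun x => Df x + Dg x).
Proof. intros Hf Hg x Hx. apply derivable_pt_lim_plus; [apply Hf|apply Hg]; auto. Qed.

Lemma has_pderiv_minus U f g i Df Dg : has_pderiv U f i Df -> has_pderiv U g i Dg ->
  has_pderiv U (fun x => f x - g x) i (fun x => Df x - Dg x).
Proof. intros Hf Hg x Hx. apply derivable_pt_lim_minus; [apply Hf|apply Hg]; auto. Qed.

Lemma has_pderiv_scal U f i Df c :
  has_pderiv U f i Df -> has_pderiv U (fun x => c * f x) i (fun x => c * Df x).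
Proof. intros Hf x Hx. apply derivable_pt_lim_scal, Hf, Hx. Qed.

Lemma has_pderiv_local d U f g i D : is_open d U -> (i < d)%nat ->
  (forall y, U y -> f y = g y) -> has_pderiv U g i D -> has_pderiv U f i D.
Proof.
  intros HU Hi Hfg Hg x Hx. apply (derivable_pt_lim_local _ (fun t => g (upd x i t))); auto.
  destruct (is_open_upd d U x i HU Hx Hi) as [rho [Hrho Hupd]].
  exists rho; split; auto.
Qed.

Lemma has_pderiv_unique U f i D1 D2 x :
  has_pderiv U f i D1 -> has_pderiv U f i D2 -> U x -> D1 x = D2 x.
Proof. intros H1 H2 Hx. eapply uniqueness_limite; [apply H1|apply H2]; auto. Qed.

Lemma cont_on_scal d U f c : cont_on d U f -> cont_on d U (fun x => c * f x).
Proof.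
  intros Hf x Hx eps Heps. pose proof (Rabs_pos c).
  destruct (Hf x Hx (eps / (Rabs c + 1))) as [del [Hdel Hnear]];
    [apply Rdiv_lt_0_compat; lra|].
  exists del; split; auto. intros y Hy Hxy. specialize (Hnear y Hy Hxy).
  rewrite <- Rmult_minus_distr_l, Rabs_mult.
  apply Rle_lt_trans with (Rabs c * (eps / (Rabs c + 1))); [apply Rmult_le_compat_l; lra|].
  assert (0 < eps / (Rabs c + 1)) by (apply Rdiv_lt_0_compat; lra).
  replace eps with ((Rabs c + 1) * (eps / (Rabs c + 1))) at 2 by (field; lra).
  nra.
Qed.

(** * C^2 bounds *)

Lemma mnorm_nonneg d A : 0 <= mnorm d A.
Proof. apply rsum_nonneg; intros; apply rsum_nonneg; intros; apply Rabs_pos. Qed.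

Lemma Rabs_le_mnorm d (A : Mat) i j : (i < d)%nat -> (j < d)%nat -> Rabs (A i j) <= mnorm d A.
Proof.
  intros Hi Hj. unfold mnorm.
  eapply Rle_trans; [|apply (rsum_ge_term d (fun i => rsum d (fun j => Rabs (A i j))) i)];
    [| intros; apply rsum_nonneg; intros; apply Rabs_pos | exact Hi].
  apply (rsum_ge_term d (fun j => Rabs (A i j))); [intros; apply Rabs_pos|exact Hj].
Qed.

Lemma mnorm_lin d a b (A B : Mat) : 0 <= a -> 0 <= b ->
  mnorm d (fun i j => a * A i j + b * B i j) <= a * mnorm d A + b * mnorm d B.
Proof.
  intros Ha Hb. unfold mnorm. rewrite <- !rsum_scal, <- rsum_plus.
  apply rsum_le_compat; intros i _. rewrite <- !rsum_scal, <- rsum_plus.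
  apply rsum_le_compat; intros j _.
  eapply Rle_trans; [apply Rabs_triang|].
  rewrite !Rabs_mult, (Rabs_pos_eq a), (Rabs_pos_eq b) by assumption. lra.
Qed.

Lemma mnorm_le_of_entries d (A : Mat) K :
  (forall i j, (i < d)%nat -> (j < d)%nat -> Rabs (A i j) <= K) ->
  mnorm d A <= INR d * (INR d * K).
Proof.
  intros HA. unfold mnorm. rewrite <- rsum_const. apply rsum_le_compat; intros i Hi.
  rewrite <- rsum_const. apply rsum_le_compat; intros j Hj. auto.
Qed.

(* The left-hand side of the final inequality in [c2_small]. *)
Definition c2_total (d : nat) (M0 : R) (M1 : nat -> R) (M2 : nat -> nat -> R) : R :=
  M0 + rsum d M1 + rsum d (fun i => rsum d (fun j => if Nat.leb i j then M2 i j else 0)).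

Definition c2_bounded (d : nat) (U : pt -> Prop) (h : pt -> Mat) (B : R) : Prop :=
  exists (D1 : nat -> pt -> Mat) (D2 : nat -> nat -> pt -> Mat),
    (forall i a b, (i < d)%nat -> (a < d)%nat -> (b < d)%nat ->
       has_pderiv U (fun x => h x a b) i (fun x => D1 i x a b)) /\
    (forall i j a b, (i < d)%nat -> (j < d)%nat -> (a < d)%nat -> (b < d)%nat ->
       has_pderiv U (fun x => D1 i x a b) j (fun x => D2 i j x a b)) /\
    exists (M0 : R) (M1 : nat -> R) (M2 : nat -> nat -> R),
      (forall x, U x -> mnorm d (h x) <= M0) /\
      (forall i x, (i < d)%nat -> U x -> mnorm d (D1 i x) <= M1 i) /\
      (forall i j x, (i <= j)%nat -> (j < d)%nat -> U x -> mnorm d (D2 i j x) <= M2 i j) /\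
      c2_total d M0 M1 M2 <= B.

Lemma c2_small_iff d U h eps : c2_small d U h eps <-> exists B, B < eps /\ c2_bounded d U h B.
Proof.
  split.
  - intros [D1 [D2 [H1 [H2 [M0 [M1 [M2 [H3 [H4 [H5 Htot]]]]]]]]]].
    exists (c2_total d M0 M1 M2). split; [exact Htot|].
    exists D1, D2. do 2 (split; [assumption|]). exists M0, M1, M2. repeat split; auto; lra.
  - intros [B [HB [D1 [D2 [H1 [H2 [M0 [M1 [M2 [H3 [H4 [H5 Htot]]]]]]]]]]]].
    exists D1, D2. do 2 (split; [assumption|]). exists M0, M1, M2.
    repeat split; auto. unfold c2_total in Htot. lra.
Qed.

Lemma c2_total_lin d a b M0 M1 M2 N0 N1 N2 :
  c2_total d (a * M0 + b * N0) (fun k => a * M1 k + b * N1 k) (fun k l => a * M2 k l + b * N2 k l)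
  = a * c2_total d M0 M1 M2 + b * c2_total d N0 N1 N2.
Proof.
  unfold c2_total.
  assert (E : forall X Y : nat -> nat -> R,
    rsum d (fun i => rsum d (fun j => if Nat.leb i j then a * X i j + b * Y i j else 0))
    = a * rsum d (fun i => rsum d (fun j => if Nat.leb i j then X i j else 0))
      + b * rsum d (fun i => rsum d (fun j => if Nat.leb i j then Y i j else 0))).
  { intros X Y. rewrite <- !rsum_scal, <- rsum_plus. apply rsum_ext; intros i _.
    rewrite <- !rsum_scal, <- rsum_plus. apply rsum_ext; intros j _.
    destruct (Nat.leb i j); ring. }
  rewrite E, rsum_plus, !rsum_scal. ring.
Qed.

Lemma c2_bounded_lin d U h g B B' a b : 0 <= a -> 0 <= b ->
  c2_bounded d U h B -> c2_bounded d U g B' ->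
  c2_bounded d U (fun x i j => a * h x i j + b * g x i j) (a * B + b * B').
Proof.
  intros Ha Hb [D1 [D2 [H1 [H2 [M0 [M1 [M2 [H3 [H4 [H5 Htot]]]]]]]]]]
    [E1 [E2 [G1 [G2 [N0 [N1 [N2 [G3 [G4 [G5 Gtot]]]]]]]]]].
  exists (fun k x i j => a * D1 k x i j + b * E1 k x i j),
    (fun k l x i j => a * D2 k l x i j + b * E2 k l x i j).
  split; [intros; apply has_pderiv_lin; auto|].
  split; [intros; apply has_pderiv_lin; auto|].
  exists (a * M0 + b * N0), (fun k => a * M1 k + b * N1 k), (fun k l => a * M2 k l + b * N2 k l).
  repeat split; intros;
    try (eapply Rle_trans; [apply mnorm_lin; auto|];
         apply Rplus_le_compat; apply Rmult_le_compat_l; auto).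
  rewrite c2_total_lin. apply Rplus_le_compat; apply Rmult_le_compat_l; auto.
Qed.

Lemma c2_bounded_pderiv d U h B : c2_bounded d U h B ->
  exists D1 : nat -> pt -> Mat, forall i a b, (i < d)%nat -> (a < d)%nat -> (b < d)%nat ->
    has_pderiv U (fun x => h x a b) i (fun x => D1 i x a b).
Proof. intros [D1 [_ [H1 _]]]. now exists D1. Qed.

Lemma c2_bounded_first_order d U h B x : c2_bounded d U h B -> U x ->
  exists D1 : nat -> pt -> Mat,
    (forall i a b, (i < d)%nat -> (a < d)%nat -> (b < d)%nat ->
       has_pderiv U (fun x => h x a b) i (fun x => D1 i x a b)) /\
    mnorm d (h x) + rsum d (fun i => mnorm d (D1 i x)) <= B.
Proof.
  intros [D1 [D2 [H1 [H2 [M0 [M1 [M2 [H3 [H4 [H5 Htot]]]]]]]]]] Hx.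
  exists D1. split; [exact H1|].
  assert (rsum d (fun i => mnorm d (D1 i x)) <= rsum d M1) by (apply rsum_le_compat; auto).
  assert (0 <= rsum d (fun i => rsum d (fun j => if Nat.leb i j then M2 i j else 0))).
  { apply rsum_nonneg; intros i Hi; apply rsum_nonneg; intros j Hj.
    destruct (Nat.leb_spec i j); [|lra].
    eapply Rle_trans; [apply mnorm_nonneg|apply (H5 i j x)]; auto. }
  specialize (H3 x Hx). unfold c2_total in Htot. lra.
Qed.

Lemma c2_bounded_entry d U h B x a b : c2_bounded d U h B -> U x ->
  (a < d)%nat -> (b < d)%nat -> Rabs (h x a b) <= B.
Proof.
  intros Hh Hx Ha Hb. destruct (c2_bounded_first_order d U h B x Hh Hx) as [D1 [_ HB]].
  assert (0 <= rsum d (fun i => mnorm d (D1 i x))) by (apply rsum_nonneg; intros; apply mnorm_nonneg).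
  pose proof (Rabs_le_mnorm d (h x) a b Ha Hb). lra.
Qed.

Lemma c2_bounded_div d U h B (D : nat -> pt -> Mat) x a : c2_bounded d U h B ->
  (forall j a b, (j < d)%nat -> (a < d)%nat -> (b < d)%nat ->
     has_pderiv U (fun x => h x a b) j (fun x => D j x a b)) ->
  U x -> (a < d)%nat -> Rabs (rsum d (fun j => D j x a j)) <= B.
Proof.
  intros Hh HD Hx Ha. destruct (c2_bounded_first_order d U h B x Hh Hx) as [D1 [HD1 HB]].
  pose proof (mnorm_nonneg d (h x)).
  eapply Rle_trans; [apply Rabs_rsum_le|].
  rewrite (rsum_ext d _ (fun j => Rabs (D1 j x a j)))
    by (intros j Hj; f_equal;
        apply (has_pderiv_unique U (fun y => h y a j) j (fun y => D j y a j) (fun y => D1 j y a j));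
        auto).
  eapply Rle_trans; [|exact HB].
  assert (rsum d (fun j => Rabs (D1 j x a j)) <= rsum d (fun j => mnorm d (D1 j x)))
    by (apply rsum_le_compat; intros; apply Rabs_le_mnorm; auto).
  lra.
Qed.

(** * Compactly supported smooth functions have bounded derivatives *)

Definition near_complement (d : nat) (U : pt -> Prop) (del : R) (x : pt) : Prop :=
  exists y, inRd d y /\ ~ U y /\ near d x y del.

Lemma smooth_derivs_vanish d U f (D : list nat -> pt -> R) del : is_open d U -> 0 < del ->
  (forall x, U x -> D nil x = f x) ->
  (forall l i, (i < d)%nat -> has_pderiv U (D l) i (D (cons i l))) ->
  (forall x, U x -> near_complement d U del x -> f x = 0) ->
  forall l, Forall (fun i => (i < d)%nat) l ->
  forall x, U x -> near_complement d U del x -> D l x = 0.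
Proof.
  intros HU Hdel Hnil HD Hsupp l Hl. induction Hl as [|i l Hi Hl IH]; intros x Hx Hnear.
  { rewrite Hnil by exact Hx. auto. }
  destruct Hnear as [y [Hy [HyU Hxy]]].
  set (m := rmax d (fun k => Rabs (y k - x k))).
  assert (Hm : m < del) by (apply rmax_lt; auto).
  eapply uniqueness_limite; [apply HD; auto|].
  destruct (is_open_upd d U x i HU Hx Hi) as [rho [Hrho Hupd]].
  apply (derivable_pt_lim_local _ (fun _ => 0)); [|apply derivable_pt_lim_const].
  exists (Rmin rho (del - m)). split; [apply Rmin_pos; lra|]. intros t Ht.
  apply IH; [apply Hupd; eapply Rlt_le_trans; [eauto|apply Rmin_l]|].
  exists y. do 2 (split; [assumption|]). intros k Hk.
  eapply Rle_lt_trans; [apply Rabs_sub_upd_le|].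
  assert (Rabs (y k - x k) <= m) by (apply (rmax_ge_term d (fun k => Rabs (y k - x k))); auto).
  assert (Rabs t < del - m) by (eapply Rlt_le_trans; [eauto|apply Rmin_r]).
  lra.
Qed.

Fixpoint tn_of_pt (n : nat) (x : pt) : Tn n R :=
  match n with O => tt | S n => (x 0%nat, tn_of_pt n (fun k => x (S k))) end.

Fixpoint pt_of_tn (n : nat) : Tn n R -> pt :=
  match n with
  | O => fun _ _ => 0
  | S n => fun t k => match k with O => fst t | S k => pt_of_tn n (snd t) k end
  end.

Lemma pt_of_tn_inRd n t : inRd n (pt_of_tn n t).
Proof.
  revert t; induction n as [|n IH]; intros t k Hk; [reflexivity|].
  destruct k; [lia|]. simpl. apply IH. lia.
Qed.

Lemma tn_of_pt_of_tn n t : tn_of_pt n (pt_of_tn n t) = t.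
Proof. induction n as [|n IH]; destruct t; simpl; [reflexivity|f_equal; apply IH]. Qed.

Lemma bounded_n_tn_of_pt n M x : (forall k, (k < n)%nat -> Rabs (x k) <= M) ->
  bounded_n n (tn_of_pt n (fun _ => - M)) (tn_of_pt n (fun _ => M)) (tn_of_pt n x).
Proof.
  revert x; induction n as [|n IH]; intros x Hx; simpl; [exact I|split].
  - pose proof (Hx 0%nat ltac:(lia)). pose proof (Rle_abs (x 0%nat)).
    pose proof (Rle_abs (- x 0%nat)). rewrite Rabs_Ropp in *. lra.
  - apply IH. intros; apply Hx; lia.
Qed.

Lemma close_n_tn_of_pt n del x y : close_n n del (tn_of_pt n x) (tn_of_pt n y) ->
  forall k, (k < n)%nat -> Rabs (x k - y k) < del.
Proof.
  revert x y; induction n as [|n IH]; intros x y Hclose k Hk; [lia|].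
  destruct Hclose as [H0 Hclose].
  destruct k; [exact H0|]. apply (IH (fun k => x (S k)) (fun k => y (S k))); auto; lia.
Qed.

(* A box containing [U] is covered by finitely many of the neighbourhoods
   (Coquelicot's [compactness_list]). *)
Lemma bounded_of_locally_bounded d U (f : pt -> R) :
  (forall x, U x -> inRd d x) -> bounded_set d U ->
  (forall x, inRd d x -> exists del, 0 < del /\
     exists K, forall y, U y -> near d x y del -> Rabs (f y) <= K) ->
  exists K, forall y, U y -> Rabs (f y) <= K.
Proof.
  intros HUd [M HM] Hloc.
  destruct (choice (fun (t : Tn d R) (p : posreal * R) =>
    forall y, U y -> near d (pt_of_tn d t) y (fst p) -> Rabs (f y) <= snd p)) as [cover Hcover].
  { intros t. destruct (Hloc (pt_of_tn d t) (pt_of_tn_inRd d t)) as [del [Hdel [K HK]]].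
    now exists (mkposreal del Hdel, K). }
  apply NNPP; intros Hunbounded.
  apply (compactness_list d (tn_of_pt d (fun _ => - M)) (tn_of_pt d (fun _ => M))
           (fun t => fst (cover t))).
  intros [l Hl]. apply Hunbounded.
  set (Kmax := fold_right (fun t K => Rmax (snd (cover t)) K) 0 l).
  assert (HKmax : forall t, In t l -> snd (cover t) <= Kmax).
  { unfold Kmax; clear; induction l as [|t' l IH]; simpl; intros t Ht; [contradiction|].
    destruct Ht as [<-|Ht]; [apply Rmax_l|eapply Rle_trans; [apply IH, Ht|apply Rmax_r]]. }
  exists Kmax. intros y Hy.
  destruct (Hl (tn_of_pt d y)) as [t [Ht [_ Hclose]]];
    [apply bounded_n_tn_of_pt; intros; apply HM; auto|].
  eapply Rle_trans; [|apply HKmax, Ht]. apply Hcover; [exact Hy|].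
  pose proof (close_n_tn_of_pt d (fst (cover t)) y (pt_of_tn d t)) as Hnear.
  rewrite tn_of_pt_of_tn in Hnear. exact (Hnear Hclose).
Qed.

Lemma smooth_derivs_bounded d U f (D : list nat -> pt -> R) del :
  is_open d U -> bounded_set d U -> 0 < del ->
  (forall x, U x -> D nil x = f x) ->
  (forall l i, (i < d)%nat -> has_pderiv U (D l) i (D (cons i l))) ->
  (forall l, cont_on d U (D l)) ->
  (forall x, U x -> near_complement d U del x -> f x = 0) ->
  forall l, Forall (fun i => (i < d)%nat) l -> exists K, forall y, U y -> Rabs (D l y) <= K.
Proof.
  intros HU Hbd Hdel Hnil HD Hcont Hsupp l Hl.
  apply (bounded_of_locally_bounded d); [apply HU|exact Hbd|]. intros x Hx.
  destruct (classic (U x)) as [HxU|HxU].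
  - destruct (Hcont l x HxU 1 Rlt_0_1) as [del' [Hdel' Hnear]].
    exists del'; split; [exact Hdel'|]. exists (Rabs (D l x) + 1). intros y Hy Hxy.
    specialize (Hnear y Hy Hxy). pose proof (Rabs_triang (D l y - D l x) (D l x)).
    replace (D l y - D l x + D l x) with (D l y) in * by ring. lra.
  - exists del; split; [exact Hdel|]. exists 0. intros y Hy Hxy.
    rewrite (smooth_derivs_vanish d U f D del HU Hdel Hnil HD Hsupp l Hl y Hy), Rabs_R0; [lra|].
    exists x. do 2 (split; [assumption|]). intros k Hk. rewrite Rabs_minus_sym. auto.
Qed.

Lemma exists_common_bound N (P : nat -> R -> Prop) :
  (forall n K K', K <= K' -> P n K -> P n K') ->
  (forall n, (n < N)%nat -> exists K, P n K) -> exists K, forall n, (n < N)%nat -> P n K.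
Proof.
  intros Hmono HP. induction N as [|N IH]; [exists 0; intros; lia|].
  destruct IH as [K1 HK1]; [intros; apply HP; lia|].
  destruct (HP N) as [K2 HK2]; [lia|].
  exists (Rmax K1 K2). intros n Hn. destruct (Nat.eq_dec n N) as [->|].
  - eapply Hmono; [apply Rmax_r|exact HK2].
  - eapply Hmono; [apply Rmax_l|apply HK1; lia].
Qed.

Lemma exists_common_bound2 N (P : nat -> nat -> R -> Prop) :
  (forall i j K K', K <= K' -> P i j K -> P i j K') ->
  (forall i j, (i < N)%nat -> (j < N)%nat -> exists K, P i j K) ->
  exists K, forall i j, (i < N)%nat -> (j < N)%nat -> P i j K.
Proof.
  intros Hmono HP.
  destruct (exists_common_bound N (fun i K => forall j, (j < N)%nat -> P i j K)) as [K HK].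
  - intros i K K' HKK' Hi j Hj. eapply Hmono; eauto.
  - intros i Hi. apply exists_common_bound; [intros; eapply Hmono; eauto|auto].
  - exists K; auto.
Qed.

Definition second_order_bounded (d : nat) (U : pt -> Prop) (D : list nat -> pt -> R) (K : R) :=
  forall i j, (i < d)%nat -> (j < d)%nat -> forall y, U y ->
    Rabs (D nil y) <= K /\ Rabs (D (cons i nil) y) <= K /\ Rabs (D (cons j (cons i nil)) y) <= K.

Lemma second_order_bounded_le d U D K K' :
  K <= K' -> second_order_bounded d U D K -> second_order_bounded d U D K'.
Proof. intros HK HD i j Hi Hj y Hy. destruct (HD i j Hi Hj y Hy) as [? []]. repeat split; lra. Qed.

Lemma smooth_second_order_bounded d U f (D : list nat -> pt -> R) :
  is_open d U -> bounded_set d U ->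
  (forall x, U x -> D nil x = f x) ->
  (forall l i, (i < d)%nat -> has_pderiv U (D l) i (D (cons i l))) ->
  (forall l, cont_on d U (D l)) ->
  compact_support_in d U f ->
  exists K, second_order_bounded d U D K.
Proof.
  intros HU Hbd Hnil HD Hcont [del [Hdel Hsupp]].
  pose proof (smooth_derivs_bounded d U f D del HU Hbd Hdel Hnil HD Hcont Hsupp) as Hbound.
  destruct (exists_common_bound2 d (fun i j K => forall y, U y ->
    Rabs (D nil y) <= K /\ Rabs (D (cons i nil) y) <= K /\
    Rabs (D (cons j (cons i nil)) y) <= K)) as [K HK].
  - intros i j K K' HKK' HP y Hy. destruct (HP y Hy) as [? []]. repeat split; lra.
  - intros i j Hi Hj.
    destruct (Hbound nil) as [K0 HK0]; [constructor|].
    destruct (Hbound (cons i nil)) as [K1 HK1]; [repeat constructor; auto|].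
    destruct (Hbound (cons j (cons i nil))) as [K2 HK2]; [repeat constructor; auto|].
    exists (Rmax K0 (Rmax K1 K2)). intros y Hy.
    pose proof (Rmax_l K0 (Rmax K1 K2)). pose proof (Rmax_r K0 (Rmax K1 K2)).
    pose proof (Rmax_l K1 K2). pose proof (Rmax_r K1 K2).
    specialize (HK0 y Hy). specialize (HK1 y Hy). specialize (HK2 y Hy). repeat split; lra.
  - exists K. exact HK.
Qed.

Lemma Ccinf_c2_bounded d U phi : is_open d U -> bounded_set d U -> in_Ccinf d U phi ->
  exists B, c2_bounded d U phi B.
Proof.
  intros HU Hbd [_ Hsmooth].
  destruct (choice (fun (ab : nat * nat) (D : list nat -> pt -> R) =>
    (fst ab < d)%nat -> (snd ab < d)%nat ->
    (forall x, U x -> D nil x = phi x (fst ab) (snd ab)) /\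
    (forall l i, (i < d)%nat -> has_pderiv U (D l) i (D (cons i l))) /\
    (forall l, cont_on d U (D l)))) as [Der HDer].
  { intros [a b]. destruct (classic ((a < d)%nat /\ (b < d)%nat)) as [[Ha Hb]|Hab].
    - destruct (Hsmooth a b Ha Hb) as [[D HD] _]. now exists D.
    - exists (fun _ _ => 0). intros Ha Hb. tauto. }
  destruct (exists_common_bound2 d (fun a b K => second_order_bounded d U (Der (a, b)) K))
    as [K HK].
  { intros a b K K'. apply second_order_bounded_le. }
  { intros a b Ha Hb. destruct (HDer (a, b) Ha Hb) as [Hnil [HD Hcont]].
    apply (smooth_second_order_bounded d U (fun x => phi x a b)); auto.
    apply Hsmooth; auto. }
  set (M := INR d * (INR d * K)).
  exists (c2_total d M (fun _ => M) (fun _ _ => M)).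
  exists (fun i x a b => Der (a, b) (cons i nil) x),
    (fun i j x a b => Der (a, b) (cons j (cons i nil)) x).
  split; [|split].
  - intros i a b Hi Ha Hb. destruct (HDer (a, b) Ha Hb) as [Hnil [HD _]].
    apply (has_pderiv_local d U _ (Der (a, b) nil)); auto.
    intros y Hy. symmetry. now apply Hnil.
  - intros i j a b Hi Hj Ha Hb. destruct (HDer (a, b) Ha Hb) as [_ [HD _]]. now apply HD.
  - exists M, (fun _ => M), (fun _ _ => M). repeat split; [| | |lra];
      intros; apply mnorm_le_of_entries; intros a b Ha Hb.
    + destruct (HDer (a, b) Ha Hb) as [Hnil _]. rewrite <- Hnil by assumption.
      apply (HK a b Ha Hb 0%nat 0%nat); auto; lia.
    + apply (HK a b Ha Hb i 0%nat); auto; lia.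
    + apply (HK a b Ha Hb i j); auto; lia.
Qed.

Lemma C02_c2_bounded d U psi : is_open d U -> bounded_set d U -> in_C02 d U psi ->
  exists B, c2_bounded d U psi B.
Proof.
  intros HU Hbd Hpsi. destruct (Hpsi 1 Rlt_0_1) as [phi [Hphi Hclose]].
  apply c2_small_iff in Hclose as [B1 [_ HB1]].
  destruct (Ccinf_c2_bounded d U phi HU Hbd Hphi) as [B2 HB2].
  exists (1 * B1 + 1 * B2).
  replace psi with (fun x i j => 1 * mdiff psi phi x i j + 1 * phi x i j).
  - now apply c2_bounded_lin; try lra.
  - apply functional_extensionality; intros x; apply functional_extensionality; intros i;
      apply functional_extensionality; intros j. unfold mdiff; ring.
Qed.

(** * Closedness and density of the constraint set *)

Lemma in_Ccinf_scal d U phi c : in_Ccinf d U phi -> in_Ccinf d U (fun x i j => c * phi x i j).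
Proof.
  intros [Hsym Hsmooth]. split.
  - intros x Hx i j Hi Hj. now rewrite Hsym.
  - intros a b Ha Hb. destruct (Hsmooth a b Ha Hb) as [[D [Hnil [HD Hcont]]] [del [Hdel Hsupp]]].
    split.
    + exists (fun l x => c * D l x). split; [|split].
      * intros x Hx. now rewrite Hnil.
      * intros l i Hi. now apply has_pderiv_scal, HD.
      * intros l. apply cont_on_scal, Hcont.
    + exists del. split; [exact Hdel|]. intros x Hx Hnear. rewrite Hsupp by assumption. ring.
Qed.

Lemma constrained_of_approx d U r a0 a1 psi : valid_exponent r ->
  (forall eps, 0 < eps -> exists phi,
     constrained d U r a0 a1 phi /\ c2_small d U (mdiff psi phi) eps) ->
  constrained d U r a0 a1 psi.
Proof.
  intros hr Happrox.
  destruct (Happrox 1 Rlt_0_1) as [phi1 [[Dphi1 [HDphi1 _]] Hclose1]].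
  apply c2_small_iff in Hclose1 as [B1 [_ HB1]].
  destruct (c2_bounded_pderiv d U _ B1 HB1) as [E1 HE1].
  set (D := fun j x a b => E1 j x a b + Dphi1 j x a b).
  assert (HD : forall j a b, (j < d)%nat -> (a < d)%nat -> (b < d)%nat ->
    has_pderiv U (fun x => psi x a b) j (fun x => D j x a b)).
  { intros j a b Hj Ha Hb.
    apply (has_pderiv_ext U (fun x => mdiff psi phi1 x a b + phi1 x a b));
      [intros; unfold mdiff; ring|].
    apply has_pderiv_plus; auto. }
  exists D. split; [exact HD|]. intros x Hx. split.
  - rewrite lr_mat_flatten. apply lr_vec_le_of_approx; [exact hr|]. intros e He.
    destruct (Happrox e He) as [phi [[Dphi [_ Hbounds]] Hclose]].
    apply c2_small_iff in Hclose as [B [HBe HB]].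
    exists (flatten d (phi x)). split; [rewrite <- lr_mat_flatten; apply Hbounds, Hx|].
    apply flatten_close. intros i j Hi Hj.
    pose proof (c2_bounded_entry d U _ B x i j HB Hx Hi Hj). unfold mdiff in *. lra.
  - apply lr_vec_le_of_approx; [exact hr|]. intros e He.
    destruct (Happrox e He) as [phi [[Dphi [HDphi Hbounds]] Hclose]].
    apply c2_small_iff in Hclose as [B [HBe HB]].
    exists (fun i => rsum d (fun j => Dphi j x i j)). split; [apply Hbounds, Hx|].
    intros i Hi. rewrite <- rsum_minus.
    assert (Hdiff : forall j a b, (j < d)%nat -> (a < d)%nat -> (b < d)%nat ->
      has_pderiv U (fun y => mdiff psi phi y a b) j (fun y => D j y a b - Dphi j y a b))
      by (intros; apply has_pderiv_minus; auto).
    pose proof (c2_bounded_div d U _ B _ x i HB Hdiff Hx Hi). lra.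
Qed.

Lemma constrained_shrink d U r a0 a1 psi al t : valid_exponent r -> 0 < al -> 0 < t <= 1 ->
  (forall x, U x -> al < a0 x /\ al < a1 x) -> constrained d U r a0 a1 psi ->
  exists e, 0 < e /\ forall phi B, B < e -> c2_bounded d U (mdiff psi phi) B ->
    constrained d U r a0 a1 (fun x i j => (1 - t) * phi x i j).
Proof.
  intros hr Hal Ht Hlow [Dpsi [HDpsi Hpsi]].
  destruct (lr_vec_shrink_le r (d * d) hr al t Hal Ht) as [e0 [He0 Hmat]].
  destruct (lr_vec_shrink_le r d hr al t Hal Ht) as [e1 [He1 Hvec]].
  assert (He : 0 < Rmin e0 e1) by (apply Rmin_pos; lra).
  exists (Rmin e0 e1). split; [exact He|].
  intros phi B HB Hdiff. pose proof (Rmin_l e0 e1). pose proof (Rmin_r e0 e1).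
  destruct (c2_bounded_pderiv d U _ B Hdiff) as [E HE].
  exists (fun j x a b => (1 - t) * (Dpsi j x a b - E j x a b)). split.
  - intros j a b Hj Ha Hb. apply has_pderiv_scal.
    apply (has_pderiv_ext U (fun x => psi x a b - mdiff psi phi x a b));
      [intros; unfold mdiff; ring|].
    apply has_pderiv_minus; auto.
  - intros x Hx. destruct (Hlow x Hx) as [Hal0 Hal1]. destruct (Hpsi x Hx) as [Hpsi0 Hpsi1].
    assert (HB0 : 0 <= Rmax 0 B <= Rmin e0 e1) by (split; [apply Rmax_l|apply Rmax_lub; lra]).
    pose proof (Rmax_r 0 B). split.
    + rewrite lr_mat_flatten.
      apply (Hmat (a0 x) (flatten d (psi x)) (flatten d (phi x)) (Rmax 0 B)); try lra.
      * now rewrite <- lr_mat_flatten.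
      * apply flatten_close. intros i j Hi Hj. rewrite Rabs_minus_sym.
        pose proof (c2_bounded_entry d U _ B x i j Hdiff Hx Hi Hj). unfold mdiff in *. lra.
    + replace (fun i => rsum d (fun j => (1 - t) * (Dpsi j x i j - E j x i j)))
        with (fun i => (1 - t) * (rsum d (fun j => Dpsi j x i j) - rsum d (fun j => E j x i j)))
        by (apply functional_extensionality; intros i; now rewrite rsum_scal, rsum_minus).
      apply (Hvec (a1 x) (fun i => rsum d (fun j => Dpsi j x i j)) _ (Rmax 0 B)); try lra.
      intros i Hi. pose proof (c2_bounded_div d U _ B E x i Hdiff HE Hx Hi).
      replace (rsum d (fun j => Dpsi j x i j) - rsum d (fun j => E j x i j)
               - rsum d (fun j => Dpsi j x i j)) with (- rsum d (fun j => E j x i j)) by ring.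
      rewrite Rabs_Ropp. lra.
Qed.

Lemma C02_approx_by_constrained d U r a0 a1 psi :
  is_open d U -> bounded_set d U -> valid_exponent r ->
  (exists al, 0 < al /\ forall x, U x -> al < a0 x /\ al < a1 x) ->
  in_C02 d U psi -> constrained d U r a0 a1 psi ->
  forall eps, 0 < eps -> exists phi, in_Ccinf d U phi /\ constrained d U r a0 a1 phi /\
    c2_small d U (mdiff psi phi) eps.
Proof.
  intros HU Hbd hr [al [Hal Hlow]] HC02 Hpsi eps Heps.
  destruct (C02_c2_bounded d U psi HU Hbd HC02) as [B HB].
  set (t := Rmin (1 / 2) (eps / (2 * (Rabs B + 1)))).
  pose proof (Rabs_pos B).
  assert (Ht : 0 < t <= 1 / 2).
  { split; [apply Rmin_pos; [lra|apply Rdiv_lt_0_compat; lra]|apply Rmin_l]. }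
  assert (HtB : t * Rabs B <= eps / 2).
  { assert (t * (2 * (Rabs B + 1)) <= eps); [|nra].
    apply Rle_trans with (eps / (2 * (Rabs B + 1)) * (2 * (Rabs B + 1))).
    - apply Rmult_le_compat_r; [lra|apply Rmin_r].
    - right; field; lra. }
  destruct (constrained_shrink d U r a0 a1 psi al t hr Hal ltac:(lra) Hlow Hpsi)
    as [e [He Hshrink]].
  destruct (HC02 (Rmin e (eps / 2))) as [phi [Hphi Hclose]]; [apply Rmin_pos; lra|].
  apply c2_small_iff in Hclose as [Be [HBe Hdiff]].
  pose proof (Rmin_l e (eps / 2)). pose proof (Rmin_r e (eps / 2)).
  exists (fun x i j => (1 - t) * phi x i j). split; [|split].
  - now apply in_Ccinf_scal.
  - apply (Hshrink phi Be); [lra|exact Hdiff].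
  - apply c2_small_iff. exists ((1 - t) * Be + t * B). split.
    + assert ((1 - t) * Be < (1 - t) * (eps / 2)) by (apply Rmult_lt_compat_l; lra).
      assert (t * B <= t * Rabs B) by (apply Rmult_le_compat_l; [lra|apply Rle_abs]).
      nra.
    + replace (mdiff psi (fun x i j => (1 - t) * phi x i j))
        with (fun x i j => (1 - t) * mdiff psi phi x i j + t * psi x i j).
      * apply c2_bounded_lin; auto; lra.
      * apply functional_extensionality; intros x; apply functional_extensionality; intros i;
          apply functional_extensionality; intros j. unfold mdiff; ring.
Qed.

Theorem mainTheorem2 (d : nat) (Omega : pt -> Prop) (r : exponent) (alpha0 alpha1 : pt -> R)
  (hd : (2 <= d)%nat)
  (hopen : is_open d Omega) (hbdd : bounded_set d Omega) (hlip : lipschitz_boundary d Omega)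
  (hr : valid_exponent r)
  (hc0 : cont_on d (closure d Omega) alpha0) (hc1 : cont_on d (closure d Omega) alpha1)
  (hlow : exists al, 0 < al /\ forall x, Omega x -> al < alpha0 x /\ al < alpha1 x) :
  forall psi : pt -> Mat,
    (forall eps, 0 < eps -> exists phi,
        in_Ccinf d Omega phi /\ constrained d Omega r alpha0 alpha1 phi /\
        c2_small d Omega (mdiff psi phi) eps)
    <->
    (in_C02 d Omega psi /\ constrained d Omega r alpha0 alpha1 psi).
Proof.
  intros psi. split.
  - intros Happrox. split.
    + intros eps Heps. destruct (Happrox eps Heps) as [phi [Hphi [_ Hclose]]]. eauto.
    + apply constrained_of_approx; [exact hr|].
      intros eps Heps. destruct (Happrox eps Heps) as [phi [_ Hphi]]. eauto.
  - intros [HC02 Hpsi]. now apply C02_approx_by_constrained.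
Qed.
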